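(* Let $\psi\in\mathcal L$ be well-formed, let $\tau$ be a trace, and let $\sigma=\mathsf{seq}_\psi(\tau)$. Then $\sigma\models\psi$ in the propositional sense if and only if $\tau\models\psi$.
   Context: Syntax. Fix a multi-sorted signature with a finite non-empty set $V$ of data variables, each $v\in V$ having a lookback variable $\overleftarrow v$. Terms are $t::=v\mid\overleftarrow v\mid f(t_1,\dots,t_k)$; atoms are $p(t_1,\dots,t_k)$. First-order formulas are $\phi::=\top\mid\bot\mid a\mid\neg a\mid\phi\wedge\phi\mid\phi\vee\phi$. Properties are $\psi::=\phi\mid\psi\wedge\psi\mid\psi\vee\psi\mid\mathsf X\psi\mid\mathsf X_{\mathsf w}\psi\mid\psi\mathsf U\psi\mid\psi\mathsf R\psi$, forming $\mathcal L$; $\mathit{foa}(\psi)$ is the set of atoms of $\psi$. Semantics. A trace is $\tau=(M,\langle\alpha_0,\dots,\alpha_{n-1}\rangle)$ with $M$ a structure and $\alpha_i$ assignments on $V$. A term is well-defined at $i$ if $0<i<n$, or $i=0$ and it has no lookback variable. $v$ evaluates to $\alpha_i(v)$ and $\overleftarrow v$ to $\alpha_{i-1}(v)$. - $\tau,i\models p(t_1,\dots,t_k)$ iff some $t_j$ is not well-defined at $i$, or the evaluated tuple is in $p^M$; $\tau,i\models\neg a$ iff $\tau,i\not\models a$. - $\wedge$ and $\vee$ are as usual. - $\mathsf X\psi$: $i<n-1$ and $\psi$ holds at $i+1$. - $\mathsf X_{\mathsf w}\psi$: $i=n-1$ or $\psi$ holds at $i+1$. - $\psi_1\mathsf U\psi_2$: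 some $j\in[i,n)$ has $\psi_2$, with $\psi_1$ on $[i,j)$. - $\psi_1\mathsf R\psi_2$: $\psi_2$ holds on $[i,n)$, or some $j\in[i,n)$ has $\psi_1$ with $\psi_2$ on $[i,j]$. $\tau\models\psi$ iff $\tau,0\models\psi$. A sequence of atom sets $\sigma=\langle A_0,\dots,A_{n-1}\rangle$ satisfies $\psi$ in the propositional sense if the same clauses hold when each atom $a$ is treated as a Boolean proposition true at instant $i$ iff $a\in A_i$. For assignments $\alpha,\alpha'$ on $V$, $\alpha\rhd\alpha'$ maps $\overleftarrow v\mapsto\alpha(v)$ and $v\mapsto\alpha'(v)$. Corresponding atom sequence. $\mathsf{seq}_\psi(\tau)=\langle A_0,\dots,A_{n-1}\rangle$ with: - $A_0=\{a\in\mathit{foa}(\psi)\mid a$ has no lookback variable and $M,\alpha_0\models a\}$; - $A_i=\{a\in\mathit{foa}(\psi)\mid M,\alpha_{i-1}\rhd\alpha_i\models a\}$ for $0<i<n$. Well-formedness. - $\mathit{last}$ is a dedicated proposition for the last instant. - $\mathsf{tnps}(\psi)=\{\psi\}$ for (negated) atoms and temporally-rooted $\psi$, and $\mathsf{tnps}(\psi_1\wedge\psi_2)=\mathsf{tnps}(\psi_1\vee\psi_2)=\mathsf{tnps}(\psi_1)\cup\mathsf{tnps}(\psi_2)$. - $\mathsf{xnf}$ fixes literals, $\top$, $\bot$ and $\mathsf X$/$\mathsf X_{\mathsf w}$-rooted properties, commutes with $\wedge$ and $\vee$, and satisfies $\mathsf{xnf}(\psi_1\mathsf U\psi_2)=\mathsf{xnf}(\psi_2)\vee(\mathsf{xnf}(\psi_1)\wedge\mathsf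 X(\psi_1\mathsf U\psi_2))$ and $\mathsf{xnf}(\psi_1\mathsf R\psi_2)=(\mathsf{xnf}(\psi_2)\vee\mathit{last})\wedge(\mathsf{xnf}(\psi_1)\vee\mathsf X_{\mathsf w}(\psi_1\mathsf R\psi_2))$. - $\psi$ is well-formed if no (negated) atom in $\mathsf{tnps}(\mathsf{xnf}(\psi))$ contains a lookback variable. *)

From Stdlib Require List.
From mathcomp Require Import all_boot.
Set Implicit Arguments.
Unset Strict Implicit.
Unset Printing Implicit Defensive.

Record signature := Signature {
  sort : Type;
  fsym : Type;
  psym : Type;
  fdom : fsym -> seq sort;
  fcod : fsym -> sort;
  pdom : psym -> seq sort;
  dvar : finType;
  vsort : dvar -> sort }.

Section Defs.
Variable S : signature.

Inductive term : sort S -> Type :=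
| TVar (v : dvar S) : term (vsort v)
| TLb (v : dvar S) : term (vsort v)          (* the lookback variable <-v *)
| TApp (f : fsym S) : terms (fdom f) -> term (fcod f)
with terms : seq (sort S) -> Type :=
| TNil : terms [::]
| TCons (s : sort S) (ss : seq (sort S)) : term s -> terms ss -> terms (s :: ss).

Fixpoint term_lb s (t : term s) : bool :=
  match t with
  | TVar _ => false
  | TLb _ => true
  | TApp _ ts => terms_lb ts
  end
with terms_lb ss (ts : terms ss) : bool :=
  match ts with
  | TNil => false
  | TCons _ _ t ts => term_lb t || terms_lb ts
  end.

Inductive atom := Atom (p : psym S) (ts : terms (pdom p)).

Definition atom_lb (a : atom) : bool := let: Atom _ ts := a in terms_lb ts.

Inductive prop :=
| PTop | PBot
| PAtom (a : atom) | PNAtom (a : atom)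
| PAnd (x y : prop) | POr (x y : prop)
| PX (x : prop) | PXw (x : prop)
| PU (x y : prop) | PR (x y : prop).

Fixpoint foa (psi : prop) : seq atom :=
  match psi with
  | PTop | PBot => [::]
  | PAtom a | PNAtom a => [:: a]
  | PAnd x y | POr x y | PU x y | PR x y => foa x ++ foa y
  | PX x | PXw x => foa x
  end.

(* Generic LTLf-style semantics over a finite sequence of length n, where
   L i a says whether atom a is true at instant i. *)
Fixpoint holds (n : nat) (L : nat -> atom -> Prop) (psi : prop) (i : nat) : Prop :=
  match psi with
  | PTop => True
  | PBot => False
  | PAtom a => L i a
  | PNAtom a => ~ L i a
  | PAnd x y => holds n L x i /\ holds n L y i
  | POr x y => holds n L x i \/ holds n L y i
  | PX x => i < n.-1 /\ holds n L x i.+1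
  | PXw x => i = n.-1 \/ holds n L x i.+1
  | PU x y => exists j, [/\ i <= j < n, holds n L y j &
                              forall k, i <= k < j -> holds n L x k]
  | PR x y => (forall j, i <= j < n -> holds n L y j) \/
              exists j, [/\ i <= j < n, holds n L x j &
                              forall k, i <= k <= j -> holds n L y k]
  end.

Definition prop_sat (sigma : seq (atom -> Prop)) (psi : prop) : Prop :=
  holds (size sigma) (fun i a => nth (fun _ => False) sigma i a) psi 0.

Fixpoint args (C : sort S -> Type) (ss : seq (sort S)) : Type :=
  match ss with
  | [::] => unit
  | s :: ss => (C s * args C ss)%type
  end.

Record fostruct := FOStruct {
  carrier : sort S -> Type;
  fint : forall f : fsym S, args carrier (fdom f) -> carrier (fcod f);
  pint : forall p : psym S, args carrier (pdom p) -> Prop }.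

Definition assignment (M : fostruct) := forall v : dvar S, carrier M (vsort v).

Section Eval.
Variables (M : fostruct) (prev cur : assignment M).
Fixpoint teval s (t : term s) : carrier M s :=
  match t in term s return carrier M s with
  | TVar v => cur v
  | TLb v => prev v
  | TApp f ts => @fint M f (tseval ts)
  end
with tseval ss (ts : terms ss) : args (carrier M) ss :=
  match ts in terms ss return args (carrier M) ss with
  | TNil => tt
  | TCons _ _ t ts => (teval t, tseval ts)
  end.

Definition sat_fo (a : atom) : Prop :=
  let: Atom p ts := a in @pint M p (tseval ts).
End Eval.

(* Traces tau = (M, <alpha_0, ..., alpha_{n-1}>), n >= 1 *)
Record trace := Trace {
  tM : fostruct;
  talpha0 : assignment tM;
  talphas : seq (assignment tM) }.

Definition tlen (tau : trace) : nat := (size (talphas tau)).+1.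
Definition alpha (tau : trace) (i : nat) : assignment (tM tau) :=
  nth (talpha0 tau) (talpha0 tau :: talphas tau) i.

Definition term_wd n i s (t : term s) : bool :=
  (0 < i < n) || ((i == 0) && ~~ term_lb t).

Fixpoint terms_wd n i ss (ts : terms ss) : bool :=
  match ts with
  | TNil => true
  | TCons _ _ t ts => term_wd n i t && terms_wd n i ts
  end.

Definition trace_atom (tau : trace) (i : nat) (a : atom) : Prop :=
  let: Atom p ts := a in
  ~~ terms_wd (tlen tau) i ts \/
  @pint (tM tau) p (tseval (alpha tau i.-1) (alpha tau i) ts).

Definition trace_sat (tau : trace) (psi : prop) : Prop :=
  holds (tlen tau) (trace_atom tau) psi 0.

Definition seq_A (psi : prop) (tau : trace) (i : nat) : atom -> Prop :=
  fun a =>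
    if i == 0 then
      [/\ List.In a (foa psi), ~~ atom_lb a &
          sat_fo (alpha tau 0) (alpha tau 0) a]
      (* a has no lookback variable, so only alpha_0 is used *)
    else List.In a (foa psi) /\ sat_fo (alpha tau i.-1) (alpha tau i) a.

Definition seq_of (psi : prop) (tau : trace) : seq (atom -> Prop) :=
  [seq seq_A psi tau i | i <- iota 0 (tlen tau)].

Inductive xform :=
| XTop | XBot | XLast
| XLit (positive : bool) (a : atom)
| XAnd (x y : xform) | XOr (x y : xform)
| XNext (p : prop) | XWNext (p : prop).

Fixpoint xnf (psi : prop) : xform :=
  match psi with
  | PTop => XTop
  | PBot => XBot
  | PAtom a => XLit true a
  | PNAtom a => XLit false a
  | PAnd x y => XAnd (xnf x) (xnf y)
  | POr x y => XOr (xnf x) (xnf y)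
  | PX x => XNext x
  | PXw x => XWNext x
  | PU x y => XOr (xnf y) (XAnd (xnf x) (XNext (PU x y)))
  | PR x y => XAnd (XOr (xnf y) XLast) (XOr (xnf x) (XWNext (PR x y)))
  end.

Fixpoint tnps (x : xform) : seq xform :=
  match x with
  | XAnd x y | XOr x y => tnps x ++ tnps y
  | _ => [:: x]
  end.

Definition well_formed (psi : prop) : Prop :=
  forall (b : bool) (a : atom), List.In (XLit b a) (tnps (xnf psi)) -> ~~ atom_lb a.

End Defs.

From mathcomp Require Import all_boot.
From mathcomp Require Import zify.
From Stdlib Require List.

Set Implicit Arguments.
Unset Strict Implicit.
Unset Printing Implicit Defensive.

(* The trace semantics and the propositional semantics of seq_psi(tau) give
   every atom of psi the same value at every instant, except that at instant 0 an atom with a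
   lookback variable is vacuously true on the trace side and absent from
   A_0.  By induction on the formula, with the invariant that the formula
   is well-formed whenever it is evaluated at instant 0, such atoms are
   never inspected at instant 0: X and X_w move strictly forward, and the
   operands of U and R evaluated at instant 0 are again well-formed since
   their expansions occur inside xnf of the U/R formula. *)

Section WellFormed.
Variable S : signature.

Definition lits_lb_free (s : seq (xform S)) : Prop :=
  forall (b : bool) (a : atom S), List.In (XLit b a) s -> ~~ atom_lb a.

Lemma lits_lb_free_cat (s1 s2 : seq (xform S)) :
  lits_lb_free (s1 ++ s2) -> lits_lb_free s1 /\ lits_lb_free s2.
Proof.
by move=> H; split=> b a Ha; apply: (H b); apply: List.in_or_app; [left|right].
Qed.

Lemma well_formed_PAnd (x y : prop S) :
  well_formed (PAnd x y) -> well_formed x /\ well_formed y.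
Proof. exact: lits_lb_free_cat. Qed.

Lemma well_formed_POr (x y : prop S) :
  well_formed (POr x y) -> well_formed x /\ well_formed y.
Proof. exact: lits_lb_free_cat. Qed.

Lemma well_formed_PU (x y : prop S) :
  well_formed (PU x y) -> well_formed x /\ well_formed y.
Proof. by move/lits_lb_free_cat=> [wf_y /lits_lb_free_cat[wf_x _]]. Qed.

Lemma well_formed_PR (x y : prop S) :
  well_formed (PR x y) -> well_formed x /\ well_formed y.
Proof.
by move/lits_lb_free_cat=> [/lits_lb_free_cat[wf_y _] /lits_lb_free_cat[wf_x _]].
Qed.

End WellFormed.

Lemma until_iff (n i : nat) (P1 P2 Q1 Q2 : nat -> Prop) :
  (forall k, i <= k < n -> P1 k <-> P2 k) ->
  (forall k, i <= k < n -> Q1 k <-> Q2 k) ->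
  (exists j, [/\ i <= j < n, Q1 j & forall k, i <= k < j -> P1 k]) <->
  (exists j, [/\ i <= j < n, Q2 j & forall k, i <= k < j -> P2 k]).
Proof.
move=> EP EQ; split=> -[j [ij HQ HP]]; exists j; split=> //.
- exact/EQ.
- by move=> k ik; apply/EP; [lia | exact: HP].
- exact/EQ.
- by move=> k ik; apply/EP; [lia | exact: HP].
Qed.

Lemma release_iff (n i : nat) (P1 P2 Q1 Q2 : nat -> Prop) :
  (forall k, i <= k < n -> P1 k <-> P2 k) ->
  (forall k, i <= k < n -> Q1 k <-> Q2 k) ->
  (forall j, i <= j < n -> Q1 j) \/
    (exists j, [/\ i <= j < n, P1 j & forall k, i <= k <= j -> Q1 k]) <->
  (forall j, i <= j < n -> Q2 j) \/
    (exists j, [/\ i <= j < n, P2 j & forall k, i <= k <= j -> Q2 k]).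
Proof.
move=> EP EQ; split=> -[HQ | [j [ij HP HQ]]].
- by left=> j ij; apply/EQ => //; exact: HQ.
- right; exists j; split=> //; first exact/EP.
  by move=> k ik; apply/EQ; [lia | exact: HQ].
- by left=> j ij; apply/EQ => //; exact: HQ.
- right; exists j; split=> //; first exact/EP.
  by move=> k ik; apply/EQ; [lia | exact: HQ].
Qed.

Section Agreement.
Variables (S : signature) (n : nat) (L1 L2 : nat -> atom S -> Prop).

Definition agree (A : seq (atom S)) : Prop :=
  forall j a, j < n -> List.In a A -> (j = 0 -> ~~ atom_lb a) ->
    (L1 j a <-> L2 j a).

Lemma agree_incl (A B : seq (atom S)) : List.incl A B -> agree B -> agree A.
Proof. by move=> AB agB j a jn /AB; apply: agB. Qed.

Lemma agree_catl (A B : seq (atom S)) : agree (A ++ B) -> agree A.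
Proof. exact/agree_incl/List.incl_appl/List.incl_refl. Qed.

Lemma agree_catr (A B : seq (atom S)) : agree (A ++ B) -> agree B.
Proof. exact/agree_incl/List.incl_appr/List.incl_refl. Qed.

Lemma holds_agree (phi : prop S) (i : nat) :
  i < n -> (i = 0 -> well_formed phi) -> agree (foa phi) ->
  (holds n L1 phi i <-> holds n L2 phi i).
Proof.
elim: phi i => [||a|a|x IHx y IHy|x IHx y IHy|x IHx|x IHx|x IHx y IHy|x IHx y IHy]
  i lt_in wf ag /=; try tauto.
- apply: ag => //; first by left.
  by move=> /wf/(_ true); apply; left.
- suff: L1 i a <-> L2 i a by tauto.
  apply: ag => //; first by left.
  by move=> /wf/(_ false); apply; left.
- have [wf_x wf_y] : (i = 0 -> well_formed x) /\ (i = 0 -> well_formed y).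
    by split=> /wf/well_formed_PAnd[].
  have := IHx i lt_in wf_x (agree_catl ag); have := IHy i lt_in wf_y (agree_catr ag).
  tauto.
- have [wf_x wf_y] : (i = 0 -> well_formed x) /\ (i = 0 -> well_formed y).
    by split=> /wf/well_formed_POr[].
  have := IHx i lt_in wf_x (agree_catl ag); have := IHy i lt_in wf_y (agree_catr ag).
  tauto.
- case: (ltnP i n.-1) => [lt_i_n1 | ge_i_n1]; last by split=> -[]; lia.
  have : holds n L1 x i.+1 <-> holds n L2 x i.+1 by apply: IHx => //; lia.
  tauto.
- case: (eqVneq i n.-1) => [-> | /eqP ne_i_n1]; first by split=> _; left.
  have : holds n L1 x i.+1 <-> holds n L2 x i.+1 by apply: IHx => //; lia.
  tauto.
- have [wf_x wf_y] : (i = 0 -> well_formed x) /\ (i = 0 -> well_formed y).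
    by split=> /wf/well_formed_PU[].
  apply: until_iff => k ik.
  + by apply: IHx (agree_catl ag); [lia | move=> k0; apply: wf_x; lia].
  + by apply: IHy (agree_catr ag); [lia | move=> k0; apply: wf_y; lia].
- have [wf_x wf_y] : (i = 0 -> well_formed x) /\ (i = 0 -> well_formed y).
    by split=> /wf/well_formed_PR[].
  apply: release_iff => k ik.
  + by apply: IHx (agree_catl ag); [lia | move=> k0; apply: wf_x; lia].
  + by apply: IHy (agree_catr ag); [lia | move=> k0; apply: wf_y; lia].
Qed.

End Agreement.

Section TraceLabels.
Variable S : signature.

Lemma terms_wd_at0 (n : nat) ss (ts : @terms S ss) :
  terms_wd n 0 ts = ~~ terms_lb ts.
Proof. by elim: ts => //= s ss' t ts ->; rewrite /term_wd negb_or. Qed.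

Lemma terms_wd_pos (n i : nat) ss (ts : @terms S ss) :
  0 < i < n -> terms_wd n i ts.
Proof. by move=> i_in; elim: ts => //= s ss' t ts ->; rewrite /term_wd i_in. Qed.

Lemma size_seq_of (psi : prop S) (tau : trace S) :
  size (seq_of psi tau) = tlen tau.
Proof. by rewrite size_map size_iota. Qed.

Lemma nth_seq_of (psi : prop S) (tau : trace S) (j : nat) :
  j < tlen tau -> nth (fun _ => False) (seq_of psi tau) j = seq_A psi tau j.
Proof. by move=> lt_j; rewrite (nth_map 0) ?size_iota // nth_iota. Qed.

Lemma seq_of_agree (psi : prop S) (tau : trace S) :
  agree (tlen tau) (fun j => nth (fun _ => False) (seq_of psi tau) j)
    (trace_atom tau) (foa psi).
Proof.
move=> j [p ts] lt_j in_psi lb_free; rewrite nth_seq_of // /seq_A /=.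
case: (posnP j) => [j0 | j_gt0].
- move: (lb_free j0); rewrite j0 /= terms_wd_at0 => -> /=.
  by split=> [[_ _ H] | [//|H]]; [right | split].
- rewrite terms_wd_pos ?j_gt0 //=.
  by split=> [[_ H] | [//|H]]; [right | split].
Qed.

End TraceLabels.

Theorem lemma5 (S : signature) (HV : 0 < #|dvar S|) (psi : prop S) (tau : trace S) :
  well_formed psi -> (prop_sat (seq_of psi tau) psi <-> trace_sat tau psi).
Proof.
(* [HV], non-emptiness of V, is a standing assumption that the argument does not need. *)
move=> wf_psi; rewrite /prop_sat /trace_sat size_seq_of.
by apply: holds_agree => //; exact: seq_of_agree.
Qed.
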